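(* Let $(x_n)$ be generated by (HPPA). Let $\gamma>0$ be real and let ${\rm a},{\rm B},{\rm E}:\mathbb{N}\to\mathbb{N}$ be monotone functions satisfying (Q1), (Q3), (Q4) respectively. Let $\mathcal{E},\mathcal{D},\ell\in\mathbb{N}$ satisfy $\mathcal{E}\geq 1+\sum_{i=0}^{{\rm E}(0)}\|e_i\|$, $\mathcal{D}\geq\|x_0-p\|$ for some $p\in S$, and $\ell\geq\gamma$. Define $\xi(k):=\max\{{\rm a}(2(2\mathcal{D}+\mathcal{E})(k+1)-1),\ {\rm E}(2k+1)+1\}$ and $$\chi_\ell(k):=\max\{\xi(4k+3),\ {\rm B}(8(\mathcal{D}+\mathcal{E})(k+1)\ell-1)\}+1.$$ Then $\forall k\in\mathbb{N}\ \forall n\geq\chi_\ell(k)\ \big(\|x_n-J_\gamma(x_n)\|\leq\frac{1}{k+1}\big)$.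
   Context: $X$ is a real Hilbert space, $\mathsf{A}:X\to 2^X$ a maximal monotone operator with zero set $S=\{x:0\in\mathsf{A}(x)\}$, assumed nonempty. For $\beta>0$, $J_\beta:=(Id+\beta\mathsf{A})^{-1}$ is the resolvent, a single-valued nonexpansive map with fixed point set $S$. Given $(\alpha_n)\subset\,]0,1[$, $(\beta_n)\subset(0,\infty)$, $(e_n)\subset X$, $x_0\in X$, (HPPA) is the sequence $x_{n+1}:=\alpha_n x_0+(1-\alpha_n)(J_{\beta_n}(x_n)+e_n)$. (Q1): $\forall k\,\forall n\geq{\rm a}(k)\ \alpha_n\leq\frac{1}{k+1}$. (Q3): $\forall k\,\forall n\geq{\rm B}(k)\ \beta_n\geq k$. (Q4): $\forall k\,\forall n\ \sum_{i={\rm E}(k)+1}^{{\rm E}(k)+n}\|e_i\|\leq\frac{1}{k+1}$. Monotone means nondecreasing. *)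

From Stdlib Require Import Reals Lra.
Open Scope R_scope.

Record HilbertSpace := mkHilbert {
  hcar :> Type;
  hzero : hcar;
  hadd : hcar -> hcar -> hcar;
  hopp : hcar -> hcar;
  hscal : R -> hcar -> hcar;
  hinner : hcar -> hcar -> R;
  hadd_assoc : forall x y z, hadd x (hadd y z) = hadd (hadd x y) z;
  hadd_comm : forall x y, hadd x y = hadd y x;
  hadd_zero : forall x, hadd x hzero = x;
  hadd_opp : forall x, hadd x (hopp x) = hzero;
  hscal_assoc : forall a b x, hscal a (hscal b x) = hscal (a * b) x;
  hscal_one : forall x, hscal 1 x = x;
  hscal_addr : forall a x y, hscal a (hadd x y) = hadd (hscal a x) (hscal a y);
  hscal_addl : forall a b x, hscal (a + b) x = hadd (hscal a x) (hscal b x);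
  hinner_sym : forall x y, hinner x y = hinner y x;
  hinner_addl : forall x y z, hinner (hadd x y) z = hinner x z + hinner y z;
  hinner_scall : forall a x y, hinner (hscal a x) y = a * hinner x y;
  hinner_pos : forall x, 0 <= hinner x x;
  hinner_def : forall x, hinner x x = 0 -> x = hzero;
  hcomplete : forall u : nat -> hcar,
    (forall eps, 0 < eps -> exists N, forall m n, (N <= m)%nat -> (N <= n)%nat ->
        sqrt (hinner (hadd (u m) (hopp (u n))) (hadd (u m) (hopp (u n)))) < eps) ->
    exists l, forall eps, 0 < eps -> exists N, forall n, (N <= n)%nat ->
        sqrt (hinner (hadd (u n) (hopp l)) (hadd (u n) (hopp l))) < eps
}.

Arguments hzero {h}.
Arguments hadd {h}.
Arguments hopp {h}.
Arguments hscal {h}.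
Arguments hinner {h}.

Definition hsub {X : HilbertSpace} (x y : X) : X := hadd x (hopp y).
Definition hnorm {X : HilbertSpace} (x : X) : R := sqrt (hinner x x).

(* A set-valued operator A : X -> 2^X is represented by its graph: A x u means u ∈ A(x). *)
Definition monotone_op {X : HilbertSpace} (A : X -> X -> Prop) : Prop :=
  forall x y u v, A x u -> A y v -> 0 <= hinner (hsub x y) (hsub u v).

Definition maximal_monotone {X : HilbertSpace} (A : X -> X -> Prop) : Prop :=
  monotone_op A /\
  forall x u, (forall y v, A y v -> 0 <= hinner (hsub x y) (hsub u v)) -> A x u.

(* J is the resolvent family of A: J β x = (Id + βA)^{-1} x, i.e. x ∈ J β x + β A(J β x),
   equivalently (1/β)(x - J β x) ∈ A (J β x). *)
Definition is_resolvent {X : HilbertSpace} (A : X -> X -> Prop) (J : R -> X -> X) : Prop :=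
  forall beta x, 0 < beta -> A (J beta x) (hscal (/ beta) (hsub x (J beta x))).

Fixpoint sumR (f : nat -> R) (n : nat) : R :=
  match n with
  | O => 0
  | S m => sumR f m + f m
  end.

Definition monotone_nat (f : nat -> nat) : Prop := forall m n, (m <= n)%nat -> (f m <= f n)%nat.

(* Put y_m := J_{β_m} x_m.  One step of (HPPA) gives ‖x_{m+1} - y_m‖ <= α_m ‖x_0 - y_m‖ + ‖e_m‖,
   and monotonicity of A at the two resolvent points gives
   ‖y_m - J_γ y_m‖ <= (γ/β_m) ‖x_m - y_m‖.  As J_γ is nonexpansive,
   ‖x_{m+1} - J_γ x_{m+1}‖ <= 2 ‖x_{m+1} - y_m‖ + ‖y_m - J_γ y_m‖.
   Since J_β fixes every zero p of A, all distances to p stay below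
   ‖x_0 - p‖ + Σ ‖e_i‖ <= 𝒟 + ℰ, so past χ_ℓ(k) the conditions (Q1), (Q4) and (Q3) make the
   three contributions at most 1/(4(k+1)), 1/(4(k+1)) and 1/(2(k+1)). *)

From Stdlib Require Import Reals Lra Lia.
Open Scope R_scope.

Section InnerProduct.
Context {X : HilbertSpace}.
Implicit Types (x y z : X).

Lemma hinner_0l y : hinner hzero y = 0.
Proof. pose proof (hinner_addl X hzero hzero y) as H; rewrite hadd_zero in H; lra. Qed.

Lemma hinner_0r y : hinner y hzero = 0.
Proof. rewrite hinner_sym; apply hinner_0l. Qed.

Lemma hinner_addr x y z : hinner z (hadd x y) = hinner z x + hinner z y.
Proof. rewrite !(hinner_sym _ z); apply hinner_addl. Qed.

Lemma hinner_oppl x y : hinner (hopp x) y = - hinner x y.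
Proof. pose proof (hinner_addl X x (hopp x) y) as H; rewrite hadd_opp, hinner_0l in H; lra. Qed.

Lemma hinner_oppr x y : hinner y (hopp x) = - hinner y x.
Proof. rewrite !(hinner_sym _ y); apply hinner_oppl. Qed.

Lemma hinner_scalr a x y : hinner y (hscal a x) = a * hinner y x.
Proof. rewrite !(hinner_sym _ y); apply hinner_scall. Qed.

Lemma hsub_eq0 x y : hsub x y = hzero -> x = y.
Proof.
  unfold hsub; intro H.
  rewrite <- (hadd_zero X x), <- (hadd_opp X y), (hadd_comm X y), hadd_assoc, H.
  now rewrite hadd_comm, hadd_zero.
Qed.

End InnerProduct.

(* Vector identities are checked on squared norms, where they become ring identities. *)
Ltac hinner_expand := unfold hsub; repeat (rewrite hinner_addl || rewrite hinner_addr
  || rewrite hinner_oppl || rewrite hinner_oppr || rewrite hinner_scall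
  || rewrite hinner_scalr || rewrite hinner_0l || rewrite hinner_0r).

Section Norm.
Context {X : HilbertSpace}.
Implicit Types (u v w : X).

Lemma hnorm_ge0 v : 0 <= hnorm v.
Proof. apply sqrt_pos. Qed.

Lemma hnorm_sqr v : hnorm v * hnorm v = hinner v v.
Proof. apply sqrt_sqrt, hinner_pos. Qed.

Lemma hnorm_le_of_sqr v r : 0 <= r -> hinner v v <= r * r -> hnorm v <= r.
Proof.
  intros Hr H; unfold hnorm; rewrite <- (sqrt_square r) by exact Hr.
  apply sqrt_le_1_alt; exact H.
Qed.

Lemma hnorm_eq_of_inner u v : hinner u u = hinner v v -> hnorm u = hnorm v.
Proof. unfold hnorm; intros ->; reflexivity. Qed.

Lemma hnorm_sub_sym u v : hnorm (hsub u v) = hnorm (hsub v u).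
Proof. apply hnorm_eq_of_inner; hinner_expand; ring. Qed.

Lemma hnorm_sub_diag v : hnorm (hsub v v) = 0.
Proof.
  unfold hnorm; replace (hinner (hsub v v) (hsub v v)) with 0 by (hinner_expand; ring).
  apply sqrt_0.
Qed.

Lemma hnorm_scal a v : hnorm (hscal a v) = Rabs a * hnorm v.
Proof.
  unfold hnorm; rewrite hinner_scall, hinner_scalr, <- Rmult_assoc.
  rewrite sqrt_mult_alt by apply Rle_0_sqr.
  now rewrite <- (sqrt_Rsqr_abs a).
Qed.

Lemma hinner_le_norm u v : hinner u v <= hnorm u * hnorm v.
Proof.
  set (a := hinner u u); set (b := hinner u v); set (c := hinner v v).
  assert (Hquad : forall t, 0 <= a + 2 * t * b + t * t * c).
  { intro t; pose proof (hinner_pos X (hadd u (hscal t v))) as H; revert H.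
    hinner_expand; rewrite (hinner_sym _ v u); unfold a, b, c; intro H; lra. }
  assert (Ha : 0 <= a) by apply hinner_pos.
  assert (Hc : 0 <= c) by apply hinner_pos.
  assert (Hb : b * b <= a * c).
  { destruct (Req_dec c 0) as [Hc0 | Hc0].
    - apply hinner_def in Hc0; unfold b; subst v; rewrite hinner_0r; nra.
    - specialize (Hquad (- b / c)).
      replace (a + 2 * (- b / c) * b + (- b / c) * (- b / c) * c)
        with ((a * c - b * b) / c) in Hquad by (field; exact Hc0).
      apply Rmult_le_compat_r with (r := c) in Hquad; [|exact Hc].
      unfold Rdiv in Hquad; rewrite Rmult_assoc, Rinv_l in Hquad by exact Hc0; lra. }
  unfold hnorm; fold a c; rewrite <- sqrt_mult by assumption.
  destruct (Rle_dec b 0) as [Hb0 | Hb0]; [pose proof (sqrt_pos (a * c)); lra|].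
  rewrite <- (sqrt_square b) by lra; apply sqrt_le_1_alt; exact Hb.
Qed.

Lemma hnorm_le_of_inner u v c :
  0 <= c -> hinner u u <= c * hinner u v -> hnorm u <= c * hnorm v.
Proof.
  intros Hc H; pose proof (hnorm_ge0 u); pose proof (hnorm_ge0 v).
  assert (Hsq : hnorm u * hnorm u <= hnorm u * (c * hnorm v)).
  { rewrite hnorm_sqr; pose proof (hinner_le_norm u v); nra. }
  destruct (Req_dec (hnorm u) 0) as [-> | Hu]; [apply Rmult_le_pos; assumption|].
  apply Rmult_le_reg_l with (hnorm u); lra.
Qed.

Lemma hnorm_add_le v w : hnorm (hadd v w) <= hnorm v + hnorm w.
Proof.
  apply hnorm_le_of_sqr; [pose proof (hnorm_ge0 v); pose proof (hnorm_ge0 w); lra|].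
  pose proof (hinner_le_norm v w); pose proof (hnorm_sqr v); pose proof (hnorm_sqr w).
  hinner_expand; rewrite (hinner_sym _ w v); nra.
Qed.

Lemma hnorm_sub_le u v w : hnorm (hsub u w) <= hnorm (hsub u v) + hnorm (hsub v w).
Proof.
  replace (hnorm (hsub u w)) with (hnorm (hadd (hsub u v) (hsub v w))).
  - apply hnorm_add_le.
  - apply hnorm_eq_of_inner; hinner_expand; ring.
Qed.

End Norm.

Section Resolvent.
Context {X : HilbertSpace} (A : X -> X -> Prop) (J : R -> X -> X).
Hypotheses (hmono : monotone_op A) (hJ : is_resolvent A J).

Lemma resolvent_monotone b g x w : 0 < b -> 0 < g ->
  / g * hinner (hsub (J b x) (J g w)) (hsub w (J g w))
  <= / b * hinner (hsub (J b x) (J g w)) (hsub x (J b x)).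
Proof.
  intros Hb Hg; pose proof (hmono _ _ _ _ (hJ b x Hb) (hJ g w Hg)) as H; revert H.
  hinner_expand; intro H; lra.
Qed.

Lemma resolvent_nonexpansive g u v : 0 < g ->
  hnorm (hsub (J g u) (J g v)) <= hnorm (hsub u v).
Proof.
  intro Hg; rewrite <- (Rmult_1_l (hnorm (hsub u v))).
  apply hnorm_le_of_inner; [lra|].
  pose proof (resolvent_monotone g g u v Hg Hg) as H.
  apply Rmult_le_reg_l in H; [|now apply Rinv_0_lt_compat].
  revert H; hinner_expand; intro H; lra.
Qed.

Lemma resolvent_fixed b p : 0 < b -> A p hzero -> J b p = p.
Proof.
  intros Hb Hp; apply hsub_eq0, hinner_def.
  pose proof (hmono _ _ _ _ (hJ b p Hb) Hp) as H.
  replace (hinner (hsub (J b p) p) (hsub (hscal (/ b) (hsub p (J b p))) hzero))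
    with (- / b * hinner (hsub (J b p) p) (hsub (J b p) p)) in H
    by (hinner_expand; ring).
  pose proof (Rinv_0_lt_compat b Hb); pose proof (hinner_pos X (hsub (J b p) p)); nra.
Qed.

Lemma resolvent_dist_zero_le b p x : 0 < b -> A p hzero ->
  hnorm (hsub (J b x) p) <= hnorm (hsub x p).
Proof.
  intros Hb Hp; rewrite <- (resolvent_fixed b p Hb Hp) at 1.
  now apply resolvent_nonexpansive.
Qed.

Lemma resolvent_residual_le b g x : 0 < b -> 0 < g ->
  hnorm (hsub (J b x) (J g (J b x))) <= g / b * hnorm (hsub x (J b x)).
Proof.
  intros Hb Hg; apply hnorm_le_of_inner; [left; apply Rdiv_lt_0_compat; assumption|].
  pose proof (resolvent_monotone b g x (J b x) Hb Hg) as H.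
  apply Rmult_le_compat_l with (r := g) in H; [|lra].
  rewrite <- Rmult_assoc, Rinv_r, Rmult_1_l in H by lra.
  unfold Rdiv; rewrite Rmult_assoc; exact H.
Qed.

Lemma resolvent_residual_le_via b g x z : 0 < b -> 0 < g ->
  hnorm (hsub z (J g z))
  <= 2 * hnorm (hsub z (J b x)) + g / b * hnorm (hsub x (J b x)).
Proof.
  intros Hb Hg.
  pose proof (hnorm_sub_le z (J b x) (J g z)).
  pose proof (hnorm_sub_le (J b x) (J g (J b x)) (J g z)).
  pose proof (resolvent_residual_le b g x Hb Hg).
  pose proof (resolvent_nonexpansive g (J b x) z Hg).
  rewrite (hnorm_sub_sym (J b x) z) in *; lra.
Qed.

End Resolvent.

Lemma sumR_ge0 f n : (forall i, 0 <= f i) -> 0 <= sumR f n.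
Proof. intro Hf; induction n as [|n IH]; simpl; [lra | specialize (Hf n); lra]. Qed.

Lemma sumR_add f m n : sumR f (m + n) = sumR f m + sumR (fun j => f (m + j)%nat) n.
Proof.
  induction n as [|n IH]; simpl; [rewrite Nat.add_0_r; ring|].
  rewrite Nat.add_succ_r; simpl; rewrite IH; ring.
Qed.

Lemma sumR_le_head_tail f N c d : (forall i, 0 <= f i) ->
  sumR f N <= c -> (forall n, sumR (fun j => f (N + j)%nat) n <= d) ->
  forall n, sumR f n <= c + d.
Proof.
  intros Hf Hhead Htail n.
  assert (Hle : sumR f n <= sumR f (n + N)).
  { rewrite sumR_add; pose proof (sumR_ge0 (fun j => f (n + j)%nat) N (fun j => Hf _)); lra. }
  rewrite Nat.add_comm, sumR_add in Hle; specialize (Htail n); lra.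
Qed.

Lemma sumR_tail_term_le f N c m : (forall i, 0 <= f i) ->
  (forall n, sumR (fun j => f (N + j)%nat) n <= c) -> (N <= m)%nat -> f m <= c.
Proof.
  intros Hf Htail Hm; specialize (Htail (S (m - N))); simpl in Htail.
  replace (N + (m - N))%nat with m in Htail by lia.
  pose proof (sumR_ge0 (fun j => f (N + j)%nat) (m - N) (fun j => Hf _)); lra.
Qed.

Section HPPA.
Context {X : HilbertSpace} (A : X -> X -> Prop) (J : R -> X -> X).
Hypotheses (hmono : monotone_op A) (hJ : is_resolvent A J).
Variables (alpha beta : nat -> R) (e : nat -> X) (x0 : X) (x : nat -> X).
Hypotheses (halpha : forall n, 0 < alpha n < 1) (hbeta : forall n, 0 < beta n)
  (hx0 : x O = x0)
  (hxS : forall n, x (S n) =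
     hadd (hscal (alpha n) x0) (hscal (1 - alpha n) (hadd (J (beta n) (x n)) (e n)))).

Lemma hppa_step_dist_le m q :
  hnorm (hsub (x (S m)) q)
  <= alpha m * hnorm (hsub x0 q)
     + (1 - alpha m) * (hnorm (hsub (J (beta m) (x m)) q) + hnorm (e m)).
Proof.
  replace (hnorm (hsub (x (S m)) q)) with
    (hnorm (hadd (hscal (alpha m) (hsub x0 q))
                 (hscal (1 - alpha m) (hadd (hsub (J (beta m) (x m)) q) (e m)))))
    by (apply hnorm_eq_of_inner; rewrite hxS; hinner_expand; ring).
  eapply Rle_trans; [apply hnorm_add_le|].
  pose proof (halpha m).
  rewrite !hnorm_scal, !Rabs_pos_eq by lra.
  pose proof (hnorm_add_le (hsub (J (beta m) (x m)) q) (e m)).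
  apply Rplus_le_compat_l, Rmult_le_compat_l; lra.
Qed.

Lemma hppa_dist_zero_le p n : A p hzero ->
  hnorm (hsub (x n) p) <= hnorm (hsub x0 p) + sumR (fun i => hnorm (e i)) n.
Proof.
  intro Hp; induction n as [|m IH]; simpl; [rewrite hx0; lra|].
  pose proof (hppa_step_dist_le m p) as Hstep.
  pose proof (resolvent_dist_zero_le A J hmono hJ (beta m) p (x m) (hbeta m) Hp).
  pose proof (halpha m); pose proof (hnorm_ge0 (hsub x0 p)); pose proof (hnorm_ge0 (e m)).
  pose proof (sumR_ge0 (fun i => hnorm (e i)) m (fun i => hnorm_ge0 _)).
  nra.
Qed.

Lemma hppa_residual_le g m : 0 < g ->
  hnorm (hsub (x (S m)) (J g (x (S m))))
  <= 2 * (alpha m * hnorm (hsub x0 (J (beta m) (x m))) + hnorm (e m))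
     + g / beta m * hnorm (hsub (x m) (J (beta m) (x m))).
Proof.
  intro Hg.
  pose proof (resolvent_residual_le_via A J hmono hJ (beta m) g (x m) (x (S m)) (hbeta m) Hg).
  pose proof (hppa_step_dist_le m (J (beta m) (x m))) as Hstep.
  rewrite hnorm_sub_diag in Hstep.
  pose proof (halpha m); pose proof (hnorm_ge0 (e m)); nra.
Qed.

Lemma hppa_residual_bound p D E g m : A p hzero -> hnorm (hsub x0 p) <= D ->
  (forall n, sumR (fun i => hnorm (e i)) n <= E) -> 0 < g ->
  hnorm (hsub (x (S m)) (J g (x (S m))))
  <= 2 * (alpha m * (2 * D + E) + hnorm (e m)) + g / beta m * (2 * (D + E)).
Proof.
  intros Hp HD HE Hg.
  assert (Hx : hnorm (hsub (x m) p) <= D + E)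
    by (pose proof (hppa_dist_zero_le p m Hp); specialize (HE m); lra).
  assert (Hy : hnorm (hsub p (J (beta m) (x m))) <= D + E).
  { rewrite hnorm_sub_sym.
    pose proof (resolvent_dist_zero_le A J hmono hJ (beta m) p (x m) (hbeta m) Hp); lra. }
  pose proof (hnorm_sub_le (x m) p (J (beta m) (x m)));
    pose proof (hnorm_sub_le x0 p (J (beta m) (x m))).
  eapply Rle_trans; [apply (hppa_residual_le g m Hg)|].
  pose proof (halpha m).
  assert (0 <= g / beta m) by (left; apply Rdiv_lt_0_compat; auto).
  apply Rplus_le_compat; [|apply Rmult_le_compat_l; lra].
  apply Rmult_le_compat_l; [lra|].
  apply Rplus_le_compat_r, Rmult_le_compat_l; lra.
Qed.

End HPPA.

Lemma residual_bound_le_inv D E k l g al be f :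
  0 <= D -> 1 <= E -> 0 <= k -> 1 <= l -> 0 < g <= l -> 0 <= al -> 0 < be ->
  al <= 1 / (2 * (2 * D + E) * (4 * k + 4)) -> f <= 1 / (8 * k + 8) ->
  8 * (D + E) * (k + 1) * l - 1 <= be ->
  2 * (al * (2 * D + E) + f) + g / be * (2 * (D + E)) <= 1 / (k + 1).
Proof.
  intros HD HE Hk Hl Hgl Hal Hbe Halpha Hf Hbeta.
  assert (Hanchor : al * (2 * D + E) <= 1 / (8 * k + 8)).
  { apply Rle_trans with (1 / (2 * (2 * D + E) * (4 * k + 4)) * (2 * D + E)).
    - apply Rmult_le_compat_r; lra.
    - right; field; lra. }
  assert (Hscale : 4 * (D + E) * (k + 1) * g <= be).
  { assert (HQ : 1 <= (D + E) * (k + 1)) by nra.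
    assert (0 <= (D + E) * (k + 1) * (l - g)) by nra.
    assert (1 <= (D + E) * (k + 1) * l) by nra.
    nra. }
  assert (Hratio : g / be * (2 * (D + E)) <= 1 / (2 * k + 2)).
  { apply Rmult_le_reg_r with (be * (2 * k + 2)); [nra|].
    replace (g / be * (2 * (D + E)) * (be * (2 * k + 2)))
      with (4 * (D + E) * (k + 1) * g) by (field; lra).
    replace (1 / (2 * k + 2) * (be * (2 * k + 2))) with be by (field; lra).
    exact Hscale. }
  apply Rle_trans with (2 * (1 / (8 * k + 8) + 1 / (8 * k + 8)) + 1 / (2 * k + 2)); [lra|].
  right; field; lra.
Qed.

Ltac INR_distr := repeat (rewrite mult_INR || rewrite plus_INR); simpl INR.

Lemma INR_pred_add1 n : (0 < n)%nat -> INR (n - 1) + 1 = INR n.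
Proof. intro Hn; rewrite <- S_INR; f_equal; lia. Qed.

Theorem mainTheorem9
  (X : HilbertSpace) (A : X -> X -> Prop) (J : R -> X -> X)
  (hA : maximal_monotone A) (hJ : is_resolvent A J)
  (hS : exists p : X, A p hzero)
  (alpha beta : nat -> R) (e : nat -> X) (x0 : X) (x : nat -> X)
  (halpha : forall n, 0 < alpha n < 1) (hbeta : forall n, 0 < beta n)
  (hx0 : x O = x0)
  (hxS : forall n, x (S n) =
     hadd (hscal (alpha n) x0) (hscal (1 - alpha n) (hadd (J (beta n) (x n)) (e n))))
  (gamma : R) (hgamma : 0 < gamma)
  (a B Ef : nat -> nat)
  (ha_mon : monotone_nat a) (hB_mon : monotone_nat B) (hE_mon : monotone_nat Ef)
  (hQ1 : forall k n, (a k <= n)%nat -> alpha n <= 1 / (INR k + 1))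
  (hQ3 : forall k n, (B k <= n)%nat -> INR k <= beta n)
  (hQ4 : forall k n, sumR (fun j => hnorm (e (Ef k + 1 + j)%nat)) n <= 1 / (INR k + 1))
  (Ecal Dcal l : nat)
  (hEcal : INR Ecal >= 1 + sumR (fun i => hnorm (e i)) (Ef O + 1))
  (hDcal : exists p : X, A p hzero /\ INR Dcal >= hnorm (hsub x0 p))
  (hl : INR l >= gamma) :
  let xi := fun k : nat =>
    (Nat.max (a (2 * (2 * Dcal + Ecal) * (k + 1) - 1)) (Ef (2 * k + 1) + 1))%nat in
  let chi := fun k : nat =>
    (Nat.max (xi (4 * k + 3)) (B (8 * (Dcal + Ecal) * (k + 1) * l - 1)) + 1)%nat in
  forall k n : nat, (chi k <= n)%nat ->
    hnorm (hsub (x n) (J gamma (x n))) <= 1 / (INR k + 1).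
Proof.
  intros xi chi k n Hn; unfold chi, xi in Hn.
  destruct hDcal as [p [Hp HD]]; destruct hA as [hmono _].
  assert (Herr : forall i, 0 <= hnorm (e i)) by (intro; apply hnorm_ge0).
  assert (HE : 1 <= INR Ecal)
    by (pose proof (sumR_ge0 (fun i => hnorm (e i)) (Ef O + 1) Herr); lra).
  assert (Hpos : (0 < Ecal)%nat /\ (0 < l)%nat) by (split; apply INR_lt; simpl; lra).
  assert (Hl : 1 <= INR l) by (apply (le_INR 1); lia).
  assert (Hsum : forall n, sumR (fun i => hnorm (e i)) n <= INR Ecal).
  { intro i; pose proof (sumR_le_head_tail (fun i => hnorm (e i)) (Ef O + 1)
      (INR Ecal - 1) _ Herr ltac:(lra) (hQ4 O) i) as H.
    change (INR 0) with 0 in H; lra. }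
  destruct n as [|m]; [lia|].
  assert (Ha : alpha m <= 1 / (2 * (2 * INR Dcal + INR Ecal) * (4 * INR k + 4))).
  { replace (2 * (2 * INR Dcal + INR Ecal) * (4 * INR k + 4))
      with (INR (2 * (2 * Dcal + Ecal) * (4 * k + 3 + 1))) by (INR_distr; ring).
    rewrite <- INR_pred_add1 by lia; apply hQ1; lia. }
  assert (Hb : 8 * (INR Dcal + INR Ecal) * (INR k + 1) * INR l - 1 <= beta m).
  { replace (8 * (INR Dcal + INR Ecal) * (INR k + 1) * INR l)
      with (INR (8 * (Dcal + Ecal) * (k + 1) * l)) by (INR_distr; ring).
    rewrite <- INR_pred_add1, Rplus_minus_r by lia; apply hQ3; lia. }
  assert (He : hnorm (e m) <= 1 / (8 * INR k + 8)).
  { replace (8 * INR k + 8) with (INR (2 * (4 * k + 3) + 1)%nat + 1) by (INR_distr; ring).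
    apply (sumR_tail_term_le (fun i => hnorm (e i)) (Ef (2 * (4 * k + 3) + 1) + 1)%nat);
      [exact Herr | apply hQ4 | lia]. }
  eapply Rle_trans; [apply (hppa_residual_bound A J hmono hJ alpha beta e x0 x
    halpha hbeta hx0 hxS p (INR Dcal) (INR Ecal) gamma m Hp ltac:(lra) Hsum hgamma)|].
  pose proof (halpha m); pose proof (hbeta m).
  apply (residual_bound_le_inv _ _ _ (INR l)); try lra; apply pos_INR.
Qed.
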